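(* Fix a positive integer $n$. For a prime power $q$, let $p_r(q,n)$ denote the probability that a uniformly random differential on ${\mathbb F}_q^n$ has $r$-dimensional homology. Then for every $r>1$ with $r\equiv n \pmod 2$, $\lim_{q\to\infty} p_r(q,n)=0$. Moreover, $\lim_{q\to\infty}p_0(q,n)=1$ if $n$ is even, and $\lim_{q\to\infty}p_1(q,n)=1$ if $n$ is odd. (Here $q$ ranges over prime powers.) *)

From HB Require Import structures.
From mathcomp Require Import all_boot all_order all_algebra all_field.
Set Implicit Arguments. Unset Strict Implicit. Unset Printing Implicit Defensive.
Import Order.TTheory GRing.Theory Num.Theory.
Local Open Scope ring_scope.

Definition differentials (F : finFieldType) (n : nat) : {set 'M[F]_n} :=
  [set d : 'M[F]_n | d *m d == 0].

Definition homology_dim (F : finFieldType) (n : nat) (d : 'M[F]_n) : nat :=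
  (\rank (kermx d) - \rank d)%N.

Definition p_hom (F : finFieldType) (n r : nat) : rat :=
  (#|[set d in differentials F n | homology_dim d == r]|%:R)
    / (#|differentials F n|%:R).

(* Limit as q = #|F| -> infinity, F ranging over all finite fields
   (equivalently over prime powers q, as p_hom depends only on #|F|). *)
Definition tends_to_as_q_infty (f : finFieldType -> rat) (l : rat) : Prop :=
  forall eps : rat, 0 < eps ->
    exists Q : nat, forall F : finFieldType, (Q <= #|F|)%N -> `|f F - l| < eps.

From HB Require Import structures.
From mathcomp Require Import all_boot all_order all_algebra all_field zify ring lra.
Import Order.TTheory GRing.Theory Num.Theory.
Local Open Scope ring_scope.
Set Implicit Arguments. Unset Strict Implicit. Unset Printing Implicit Defensive.

(* A differential d on F_q^n of rank k has 2k <= n and homology of dimension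
   n - 2k. Factoring d = A B with A of full column rank, B of full row rank and
   B A = 0, and dividing by the free action of GL_k on such factorisations,
   shows that for q >= 2k there are at most 2 q^(2k(n-k)) differentials of
   rank k; an explicit family shows that there are at least q^(2k(n-k))/2 of
   the maximal rank k = n/2 (rounded down). Both estimates rest on the fact that
   for q >= 2m at least half of all m x r matrices (m <= r) have full row rank.
   As 2k(n-k) increases strictly for k <= n/2, every smaller rank is rarer than
   the maximal one by a factor of order q, so the homology is 0- or
   1-dimensional (according to the parity of n) with probability tending to 1. *)

Lemma ltn_rank_exponent n m k : (2 * m <= n)%N -> (k < m)%N ->
  (2 * k * (n - k) < 2 * m * (n - m))%N.
Proof.
move=> le_2m_n lt_km.
have [a ->] : exists a, n = (2 * m + a)%N by exists (n - 2 * m)%N; lia.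
have [b ->] : exists b, m = (k + b.+1)%N by exists (m - k.+1)%N; lia.
have -> : (2 * (k + b.+1) + a - k = k + 2 * b.+1 + a)%N by lia.
have -> : (2 * (k + b.+1) + a - (k + b.+1) = k + b.+1 + a)%N by lia.
nia.
Qed.

Lemma card_fibers (T U : finType) (S : {set T}) (g : T -> U) :
  #|S| = (\sum_(u : U) #|[set x in S | g x == u]|)%N.
Proof.
rewrite -sum1_card (partition_big g xpredT) //; apply: eq_bigr => u _.
by rewrite -sum1_card; apply: eq_bigl => x; rewrite !inE.
Qed.

Lemma card_fibers_snd (A B : finType) (S : {set A * B}) :
  #|S| = (\sum_(b : B) #|[set a | (a, b) \in S]|)%N.
Proof.
rewrite (card_fibers S snd); apply: eq_bigr => b _.
have pair_b_inj : injective (fun a : A => (a, b)) by move=> a1 a2 [].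
rewrite -(card_imset [set a | (a, b) \in S] pair_b_inj).
apply: eq_card => -[a b']; rewrite !inE.
apply/andP/imsetP => [[abS /eqP /= <-]|[a' ]]; first by exists a; rewrite ?inE.
by rewrite inE => a'bS [-> ->].
Qed.

Section MatrixCounting.

Variable F : finFieldType.
Local Notation q := #|F|.

Lemma card_field_gt0 : (0 < q)%N.
Proof. by apply/card_gt0P; exists 0. Qed.

Lemma card_submx_le p k n (K : 'M[F]_(p, n)) :
  (#|[set X : 'M[F]_(k, n) | (X <= K)%MS]| <= q ^ (k * \rank K))%N.
Proof.
rewrite -card_mx -cardsT.
apply: leq_trans (leq_imset_card (fun D : 'M[F]_(k, \rank K) => D *m row_base K) _).
apply/subset_leq_card/subsetP => X; rewrite inE -(eq_row_base K) => /submxP [D ->].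
by apply/imsetP; exists D.
Qed.

Lemma row_free_col_mx m r (a : 'rV[F]_r) (b : 'M[F]_(m, r)) :
  row_free b -> ~~ (a <= b)%MS -> row_free (col_mx a b).
Proof.
move=> /eqP rank_b a_notin_b; apply/eqP/anti_leq; rewrite rank_leq_row /=.
have b_lt : (b < col_mx a b)%MS.
  by rewrite ltmxE -addsmxE addsmxSr /= -addsmxE addsmx_sub negb_and a_notin_b.
by have := rank_ltmx b_lt; rewrite rank_b.
Qed.

Lemma card_col_mx_not_row_free m r (b : 'M[F]_(m, r)) :
  (#|[set a : 'rV[F]_r | ~~ row_free (col_mx a b)]|
     <= if row_free b then q ^ m else q ^ r)%N.
Proof.
case: ifP => b_free; last by apply: leq_trans (max_card _) _; rewrite card_mx mul1n.
apply: leq_trans (_ : #|[set a : 'rV[F]_r | (a <= b)%MS]| <= _)%N.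
  apply/subset_leq_card/subsetP => a; rewrite !inE; apply: contraR.
  exact: row_free_col_mx.
by apply: leq_trans (card_submx_le 1 b) _; rewrite mul1n (eqP b_free).
Qed.

Lemma card_not_row_free m r : (m <= r)%N ->
  (#|[set Y : 'M[F]_(m, r) | ~~ row_free Y]| * q <= m * q ^ (m * r))%N.
Proof.
elim: m => [|m IH] le_mr.
  rewrite (_ : [set Y | _] = set0) ?cards0 //; apply/setP => Y.
  by rewrite !inE /row_free -leqn0 rank_leq_row.
set N := #|[set Y : 'M[F]_(m, r) | ~~ row_free Y]| in IH *.
pose S := [set p : 'rV[F]_r * 'M[F]_(m, r) | ~~ row_free (col_mx p.1 p.2)].
have le_S : (#|[set Y : 'M[F]_(m.+1, r) | ~~ row_free Y]| <= #|S|)%N.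
  apply: leq_trans (leq_imset_card (fun p => col_mx p.1 p.2 : 'M_(1 + m, r)) S).
  apply/subset_leq_card/subsetP => Y; rewrite inE => Y_nfree; apply/imsetP.
  exists (usubmx (Y : 'M_(1 + m, r)), dsubmx (Y : 'M_(1 + m, r))).
    by rewrite inE /= vsubmxK.
  by rewrite vsubmxK.
have le_S_fibers : (#|S| <= q ^ (m * r) * q ^ m + N * q ^ r)%N.
  rewrite card_fibers_snd.
  apply: (@leq_trans (\sum_b (if row_free b then q ^ m else q ^ r))).
    apply: leq_sum => b _; apply: leq_trans (card_col_mx_not_row_free b).
    by apply/subset_leq_card/subsetP => a; rewrite !inE.
  rewrite (bigID (fun b => row_free b)) /=.
  rewrite (eq_bigr (fun _ => q ^ m)%N); last by move=> b ->.
  rewrite [X in (_ + X)%N](eq_bigr (fun _ => q ^ r)%N); last by move=> b /negbTE ->.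
  rewrite !sum_nat_const leq_add // leq_mul2r; apply/orP; right.
    by rewrite -card_mx max_card.
  by apply/subset_leq_card/subsetP => x; rewrite !inE.
have le_qm : (q ^ m * q <= q ^ r)%N by rewrite -expnSr leq_pexp2l ?card_field_gt0.
have := IH (ltnW le_mr); rewrite mulSn mulSn expnD.
move: le_S le_S_fibers le_qm; move: (q ^ (m * r))%N (q ^ m)%N (q ^ r)%N #|S| => X Y Z s.
by nia.
Qed.

Lemma card_row_free_ge m r : (m <= r)%N -> (2 * m <= q)%N ->
  (q ^ (m * r) <= 2 * #|[set Y : 'M[F]_(m, r) | row_free Y]|)%N.
Proof.
move=> le_mr le_2m_q; have := card_not_row_free le_mr.
have <- : (#|[set Y : 'M[F]_(m, r) | row_free Y]|
           + #|[set Y : 'M[F]_(m, r) | ~~ row_free Y]| = q ^ (m * r))%N.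
  rewrite -card_mx -(cardsC [set Y : 'M[F]_(m, r) | row_free Y]); congr (_ + _)%N.
  by apply: eq_card => Y; rewrite !inE.
move: le_2m_q card_field_gt0; move: #|[set Y : 'M[F]_(m, r) | row_free Y]| => A.
by move: (#|[set Y : 'M[F]_(m, r) | ~~ row_free Y]|) q => N Q; nia.
Qed.

End MatrixCounting.

Lemma differential_factor (F : fieldType) n (d : 'M[F]_n) : d *m d = 0 ->
  exists (A : 'M[F]_(n, \rank d)) (B : 'M[F]_(\rank d, n)),
    [/\ A *m B = d, B *m A = 0, row_free B & row_full A].
Proof.
move=> dd; exists (col_base d), (row_base d).
have A_full := col_base_full d; have B_free := row_base_free d.
split=> //; first exact: mulmx_base.
apply: (row_full_inj A_full); apply: (row_free_inj B_free).
by rewrite mulmx0 mul0mx mulmxA mulmx_base -mulmxA mulmx_base.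
Qed.

Section Differentials.

Variable F : finFieldType.
Local Notation q := #|F|.

Definition differentials_of_rank n k := [set d in differentials F n | \rank d == k].

Lemma differential_homology_dim n (d : 'M[F]_n) : d \in differentials F n ->
  (2 * \rank d <= n)%N /\ homology_dim d = (n - 2 * \rank d)%N.
Proof.
rewrite inE => /eqP dd; have /mxrankS : (d <= kermx d)%MS by rewrite sub_kermx dd.
by rewrite /homology_dim mxrank_ker; split; lia.
Qed.

Lemma homology_differentials_of_rank n r k : n = (r + 2 * k)%N ->
  [set d in differentials F n | homology_dim d == r] = differentials_of_rank n k.
Proof.
move=> def_n; apply/setP => d; rewrite !inE; case/boolP: (d \in differentials F n).
  by case/differential_homology_dim => le_rk ->; apply/eqP/eqP; lia.
by rewrite inE => /negbTE ->.
Qed.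

Lemma homology_differentials_gt n r : (n < r)%N ->
  [set d in differentials F n | homology_dim d == r] = set0.
Proof.
move=> lt_nr; apply/setP => d; rewrite !inE; case/boolP: (d \in differentials F n).
  by case/differential_homology_dim => _ ->; apply/eqP; lia.
by rewrite inE => /negbTE ->.
Qed.

Lemma card_differentials_gt0 n : (0 < #|differentials F n|)%N.
Proof. by apply/card_gt0P; exists 0; rewrite inE mulmx0. Qed.

Lemma card_differentials n :
  #|differentials F n| = (\sum_(k < n./2.+1) #|differentials_of_rank n k|)%N.
Proof.
rewrite -sum1_card (partition_big (fun d => inord (\rank d) : 'I_n./2.+1) xpredT) //=.
apply: eq_bigr => k _; rewrite -sum1_card; apply: eq_bigl => d.
rewrite [in RHS]inE; case/boolP: (d \in differentials F n) => //.
case/differential_homology_dim => le_rk _.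
by rewrite -val_eqE /= inordK //; lia.
Qed.

Definition square_zero_factorizations n k :=
  [set p : 'M[F]_(n, k) * 'M[F]_(k, n) |
     [&& p.2 *m p.1 == 0, row_free p.2 & row_full p.1]].

Lemma card_differentials_of_rank_mul_le n k :
  (#|differentials_of_rank n k| * #|[set G : 'M[F]_k | row_free G]|
     <= #|square_zero_factorizations n k|)%N.
Proof.
rewrite (card_fibers _ (fun p => p.1 *m p.2)) -sum_nat_const.
rewrite [X in (_ <= X)%N](bigID (mem (differentials_of_rank n k))) /=.
apply: leq_trans (leq_addr _ _); apply: leq_sum => d.
rewrite !inE => /andP [/eqP dd /eqP rank_d].
move: (differential_factor dd); rewrite rank_d => -[A [B [AB BA B_free A_full]]].
have GL_inj : injective (fun G : 'M[F]_k => (A *m G, invmx G *m B)).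
  by move=> G1 G2 [/(row_full_inj A_full)].
rewrite -(card_imset _ GL_inj); apply/subset_leq_card/subsetP => p /imsetP [G].
rewrite inE row_free_unit => G_unit -> /=; rewrite !inE /= -[A *m G *m _]mulmxA (mulmxA G).
rewrite mulmxV // mul1mx AB eqxx andbT.
rewrite -mulmxA (mulmxA B) BA mul0mx mulmx0 eqxx /=.
rewrite /row_free (eqmxMfull B) ?row_full_unit ?unitmx_inv // -/(row_free B) B_free /=.
by rewrite /row_full mxrankMfree ?row_free_unit.
Qed.

Lemma card_square_zero_factorizations_le n k :
  (#|square_zero_factorizations n k| <= q ^ (k * n) * q ^ (k * (n - k)))%N.
Proof.
rewrite card_fibers_snd -card_mx -sum_nat_const; apply: leq_sum => B _.
case/boolP: (row_free B) => B_free; last first.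
  rewrite (_ : [set a | _] = set0) ?cards0 //; apply/setP => A.
  by rewrite !inE /= (negbTE B_free) andbF.
apply: leq_trans (_ : #|[set X : 'M[F]_(k, n) | (X <= kermx B^T)%MS]| <= _)%N.
  rewrite -(card_imset _ (@trmx_inj _ n k)); apply/subset_leq_card/subsetP => X.
  case/imsetP => A; rewrite !inE /= => /andP [BA _] ->.
  by rewrite sub_kermx -trmx_mul trmx_eq0.
apply: leq_trans (card_submx_le k (kermx B^T)) _.
by rewrite mxrank_ker mxrank_tr (eqP B_free).
Qed.

Lemma card_differentials_of_rank_le n k : (k <= n)%N -> (2 * k <= q)%N ->
  (#|differentials_of_rank n k| <= 2 * q ^ (2 * k * (n - k)))%N.
Proof.
move=> le_kn le_2k_q.
have := card_square_zero_factorizations_le n k.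
rewrite -expnD (_ : k * n + k * (n - k) = 2 * k * (n - k) + k * k)%N ?expnD; last by nia.
have := card_differentials_of_rank_mul_le n k.
have := card_row_free_ge (leqnn k) le_2k_q.
have : (0 < q ^ (k * k))%N by rewrite expn_gt0 card_field_gt0.
move: (q ^ (k * k))%N (q ^ (2 * k * (n - k)))%N => Qkk Q.
move: #|differentials_of_rank n k| #|[set G : 'M[F]_k | row_free G]| => D G.
move: #|square_zero_factorizations n k| => P; nia.
Qed.

Definition differential_of_pair m a (X Y : 'M[F]_(m, a)) : 'M[F]_(m + a) :=
  col_mx (- (X *m Y^T)) Y^T *m row_mx 1%:M X.

Lemma differential_of_pair_sqr m a (X Y : 'M[F]_(m, a)) :
  differential_of_pair X Y *m differential_of_pair X Y = 0.
Proof.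
rewrite /differential_of_pair mulmxA -(mulmxA _ (row_mx _ _)) mul_row_col.
by rewrite mul1mx addNr mulmx0 mul0mx.
Qed.

Lemma row_full_col_mx_trmx m a (X Y : 'M[F]_(m, a)) :
  row_free Y -> row_full (col_mx (- (X *m Y^T)) Y^T).
Proof.
rewrite /row_free -mxrank_tr -/(row_full Y^T) => /row_fullP [B BY].
by apply/row_fullP; exists (row_mx 0 B); rewrite mul_row_col mul0mx add0r.
Qed.

Lemma rank_differential_of_pair m a (X Y : 'M[F]_(m, a)) :
  row_free Y -> \rank (differential_of_pair X Y) = m.
Proof.
move=> Y_free; rewrite mxrankMfree; first exact/eqP/row_full_col_mx_trmx.
by apply/row_freeP; exists (col_mx 1%:M 0); rewrite mul_row_col mul1mx mulmx0 addr0.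
Qed.

Lemma differential_of_pair_inj m a (X1 Y1 X2 Y2 : 'M[F]_(m, a)) : row_free Y1 ->
  differential_of_pair X1 Y1 = differential_of_pair X2 Y2 -> X1 = X2 /\ Y1 = Y2.
Proof.
move=> Y1_free eq_d.
have col_part X Y : differential_of_pair X Y *m col_mx 1%:M 0 = col_mx (- (X *m Y^T)) Y^T.
  by rewrite -mulmxA mul_row_col mul1mx mulmx0 addr0 mulmx1.
have eq_col := congr1 (mulmx^~ (col_mx 1%:M 0)) eq_d; rewrite /= !col_part in eq_col.
have [_ /trmx_inj eqY] := eq_col_mx eq_col; subst Y2; split=> //.
move: eq_d; rewrite /differential_of_pair -eq_col.
by move=> /(row_full_inj (row_full_col_mx_trmx X1 Y1_free)) /eq_row_mx [].
Qed.

Lemma card_differentials_of_rank_ge m a : (m <= a)%N -> (2 * m <= q)%N ->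
  (q ^ (2 * m * a) <= 2 * #|differentials_of_rank (m + a) m|)%N.
Proof.
move=> le_ma le_2m_q.
pose S := [set p : 'M[F]_(m, a) * 'M[F]_(m, a) | row_free p.2].
have card_S : #|S| = (q ^ (m * a) * #|[set Y : 'M[F]_(m, a) | row_free Y]|)%N.
  by rewrite -card_mx -cardsT -cardsX; apply: eq_card => -[X Y]; rewrite !inE.
have d_inj : {in S &, injective (fun p => differential_of_pair p.1 p.2)}.
  move=> [X1 Y1] [X2 Y2]; rewrite inE => Y1_free _ /=.
  by case/differential_of_pair_inj => // -> ->.
have : [set differential_of_pair p.1 p.2 | p in S] \subset differentials_of_rank (m + a) m.
  apply/subsetP => _ /imsetP [[X Y] Y_free ->]; rewrite inE in Y_free.
  by rewrite !inE differential_of_pair_sqr rank_differential_of_pair ?eqxx.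
move/subset_leq_card; rewrite card_in_imset // card_S.
have := card_row_free_ge le_ma le_2m_q.
rewrite (_ : 2 * m * a = m * a + m * a)%N ?expnD; last by lia.
move: (q ^ (m * a))%N #|[set Y : 'M[F]_(m, a) | row_free Y]| => Q N.
move: #|differentials_of_rank (m + a) m| => D; nia.
Qed.

Lemma card_differentials_of_rank_lt n k : (2 * n <= q)%N -> (k < n./2)%N ->
  (#|differentials_of_rank n k| * q <= 4 * #|differentials F n|)%N.
Proof.
move=> le_2n_q lt_k_half.
have le_top : (#|differentials_of_rank n n./2| <= #|differentials F n|)%N.
  by apply/subset_leq_card/subsetP => d; rewrite inE => /andP [].
have le_2half_n : (2 * n./2 <= n)%N by lia.
have le_kn : (k <= n)%N by lia.
have le_2k_q : (2 * k <= q)%N by lia.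
have le_half : (n./2 <= n - n./2)%N by lia.
have le_2half_q : (2 * n./2 <= q)%N by lia.
have := card_differentials_of_rank_le le_kn le_2k_q.
have := card_differentials_of_rank_ge le_half le_2half_q.
rewrite (_ : n./2 + (n - n./2) = n)%N; last by lia.
have := leq_pexp2l (card_field_gt0 F) (ltn_rank_exponent le_2half_n lt_k_half).
rewrite expnS.
move: le_top; move: (q ^ (2 * k * (n - k)))%N (q ^ (2 * n./2 * (n - n./2)))%N => Qk Qtop.
move: #|differentials_of_rank n k| #|differentials_of_rank n n./2| => Dk Dtop.
move: #|differentials F n| => D; nia.
Qed.

Lemma card_differentials_of_lower_rank n : (2 * n <= q)%N ->
  ((\sum_(k < n./2) #|differentials_of_rank n k|) * q
     <= 4 * n./2 * #|differentials F n|)%N.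
Proof.
move=> le_2n_q; rewrite big_distrl /=.
apply: (@leq_trans (\sum_(k < n./2) 4 * #|differentials F n|)).
  by apply: leq_sum => k _; apply: card_differentials_of_rank_lt.
by rewrite sum_nat_const card_ord mulnCA mulnA.
Qed.

Lemma p_hom_top n r : n = (r + 2 * n./2)%N ->
  p_hom F n r = 1 - (\sum_(k < n./2) #|differentials_of_rank n k|)%:R
                    / #|differentials F n|%:R.
Proof.
move=> def_n; rewrite /p_hom (homology_differentials_of_rank def_n).
have := card_differentials_gt0 n; rewrite card_differentials big_ord_recr /=.
move: (\sum_(k < n./2) _)%N => S tot_gt0.
by rewrite natrD; field; rewrite -natrD pnatr_eq0 -lt0n.
Qed.

End Differentials.

Lemma tends_to_q_infty_ratio0 (a b : finFieldType -> nat) (c Q0 : nat) :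
  (forall F : finFieldType, (Q0 <= #|F|)%N ->
     (0 < b F)%N /\ (a F * #|F| <= c * b F)%N) ->
  tends_to_as_q_infty (fun F => (a F)%:R / (b F)%:R) 0.
Proof.
move=> bound eps eps_gt0.
exists (maxn Q0 (Num.Def.archi_bound (c%:R / eps))) => F.
rewrite geq_max => /andP [le_Q0 le_archi]; have [b_gt0 le_ab] := bound F le_Q0.
have : c%:R / eps < #|F|%:R :> rat.
  apply: lt_le_trans (archi_boundP _) _; last by rewrite ler_nat.
  by rewrite divr_ge0 // ltW.
rewrite subr0 ger0_norm ?divr_ge0 // !ltr_pdivrMr ?ltr0n //.
have : (a F)%:R * #|F|%:R <= c%:R * (b F)%:R :> rat by rewrite -!natrM ler_nat.
have : 0 < (b F)%:R :> rat by rewrite ltr0n.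
have : 0 < #|F|%:R :> rat by rewrite ltr0n card_field_gt0.
nra.
Qed.

Lemma tends_to_q_infty_1B (f g : finFieldType -> rat) :
  tends_to_as_q_infty f 0 -> (forall F, g F = 1 - f F) -> tends_to_as_q_infty g 1.
Proof.
move=> f_to0 def_g eps /f_to0 [Q f_small]; exists Q => F /f_small.
by rewrite def_g subr0 addrAC subrr add0r normrN.
Qed.

Theorem theorem1 (n : nat) (hn : (0 < n)%N) :
  (forall r : nat, (1 < r)%N -> odd r = odd n ->
     tends_to_as_q_infty (fun F => p_hom F n r) 0)
  /\ (~~ odd n -> tends_to_as_q_infty (fun F => p_hom F n 0) 1)
  /\ (odd n -> tends_to_as_q_infty (fun F => p_hom F n 1) 1).
Proof.
have top_to1 r : n = (r + 2 * n./2)%N -> tends_to_as_q_infty (fun F => p_hom F n r) 1.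
  move=> def_n; apply: tends_to_q_infty_1B (fun F => p_hom_top F def_n).
  apply: (tends_to_q_infty_ratio0 (c := 4 * n./2) (Q0 := 2 * n)) => F le_2n_q.
  by rewrite card_differentials_gt0 card_differentials_of_lower_rank.
split; last split.
- move=> r gt1_r odd_r; rewrite /p_hom.
  apply: (tends_to_q_infty_ratio0 (c := 4) (Q0 := 2 * n)) => F le_2n_q.
  rewrite card_differentials_gt0; split=> //.
  have [lt_nr|le_rn] := ltnP n r; first by rewrite homology_differentials_gt // cards0.
  have := odd_double_half (n - r); rewrite oddB // odd_r addbb add0n => even_nr.
  have def_n : n = (r + 2 * (n - r)./2)%N by lia.
  by rewrite (homology_differentials_of_rank F def_n) card_differentials_of_rank_lt //; lia.
- by move=> even_n; apply: top_to1; have := odd_double_half n; rewrite (negbTE even_n); lia.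
- by move=> odd_n; apply: top_to1; have := odd_double_half n; rewrite odd_n; lia.
Qed.
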